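(* Let $n,k\ge 1$, $\lambda_2\ge 0$, let $A_1,A_2\in\mathbb{R}^{k\times k}$ be symmetric, $B_1,B_2\in\mathbb{R}^{n\times k}$, and let $W_P,W_Q\in\mathbb{R}^{n\times n}$ be symmetric with nonnegative entries, $D_P,D_Q$ the diagonal matrices with $(D_P)_{ii}=\sum_j (W_P)_{ij}$, $(D_Q)_{ii}=\sum_j (W_Q)_{ij}$, and $L_P=D_P-W_P$, $L_Q=D_Q-W_Q$. For $V=[v_{ij}]\in\mathbb{R}^{n\times k}$ define $$F(V)=\mathrm{Tr}\big(-2V^TB_1^+ + 2V^TB_1^- + VA_1^+V^T - VA_1^-V^T - 2V^TB_2^+ + 2V^TB_2^- + VA_2^+V^T - VA_2^-V^T + \lambda_2 V^TD_PV - \lambda_2 V^TW_PV + \lambda_2 V^TD_QV - \lambda_2 V^TW_QV\big),$$ and consider the problem $\min_V F(V)$ subject to $v_{ij}\ge 0$. Define the update $V\mapsto \mathcal{T}(V)$ by $$\mathcal{T}(V)_{ij}= v_{ij}\sqrt{\frac{\big(B_1^{+}+B_2^{+}+V(A_1^{-}+A_2^{-})+\lambda_2(W_P+W_Q)V\big)_{ij}}{\big(B_1^{-}+B_2^{-}+V(A_1^{+}+A_2^{+})+\lambda_2(D_P+D_Q)V\big)_{ij}}}.$$ Let $V^{(0)}$ have strictly positive entries and $V^{(t+1)}=\mathcal{T}(V^{(t)})$, and assume that at every iterate all numerator and denominator entries above are strictly positive. Then $F(V^{(t+1)})\le F(V^{(t)})$ for all $t\ge 0$, i.e. $F$ is monotonically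 non-increasing along the iteration. Moreover, if $V^{(t)}\to V^*$ and the denominator entries at $V^*$ are strictly positive, then $V^*$ satisfies the KKT complementary slackness condition $$\big(-2B_1-2B_2+2V^*(A_1+A_2)+2\lambda_2(L_P+L_Q)V^*\big)_{ij}\, v^*_{ij}=0\quad\text{for all } i,j.$$
   Context: For a real matrix $M$, $M^+$ and $M^-$ denote the entrywise parts $M^+_{ij}=(|M_{ij}|+M_{ij})/2$ and $M^-_{ij}=(|M_{ij}|-M_{ij})/2$, so $M=M^+-M^-$ with $M^+,M^-\ge 0$ entrywise. In the paper's application, $A_1=\mathrm{vec}(\mathbf U^{(P)})^T\mathrm{vec}(\mathbf U^{(P)})$, $A_2=\mathrm{vec}(\mathbf U^{(Q)})^T\mathrm{vec}(\mathbf U^{(Q)})$, $B_1=\mathrm{vec}(\mathbf X^{(P)})^T\mathrm{vec}(\mathbf U^{(P)})$, $B_2=\mathrm{vec}(\mathbf X^{(Q)})^T\mathrm{vec}(\mathbf U^{(Q)})$, where for a collection of matrices $\mathbf M=\{M_1,\dots,M_m\}$, $\mathrm{vec}(\mathbf M)$ is the matrix whose $i$-th column is the vectorization of $M_i$; $F(V)$ then equals, up to an additive constant independent of $V$, the TS-NMF objective as a function of $V$. *)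

From HB Require Import structures.
From mathcomp Require Import all_boot all_order all_algebra.
From mathcomp Require Import all_classical all_reals all_analysis.
Set Implicit Arguments. Unset Strict Implicit. Unset Printing Implicit Defensive.
Import Order.TTheory GRing.Theory Num.Theory.
Local Open Scope ring_scope.

Section Defs.
Variable R : realType.

Definition mpos m n (M : 'M[R]_(m, n)) : 'M[R]_(m, n) :=
  map_mx (fun x => (`|x| + x) / 2) M.
Definition mneg m n (M : 'M[R]_(m, n)) : 'M[R]_(m, n) :=
  map_mx (fun x => (`|x| - x) / 2) M.

Definition degmx n (W : 'M[R]_n) : 'M[R]_n := diag_mx (\row_i \sum_j W i j).

Definition laplacian n (W : 'M[R]_n) : 'M[R]_n := degmx W - W.

(* The objective F(V); the trace of the (formal) sum is the sum of the traces
   of the individual k x k and n x n terms. *)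
Definition Fobj n k (lam2 : R) (A1 A2 : 'M[R]_k) (B1 B2 : 'M[R]_(n, k))
    (WP WQ : 'M[R]_n) (V : 'M[R]_(n, k)) : R :=
    \tr (- 2%:R *: (V^T *m mpos B1)) + \tr (2%:R *: (V^T *m mneg B1))
  + \tr (V *m mpos A1 *m V^T) - \tr (V *m mneg A1 *m V^T)
  + \tr (- 2%:R *: (V^T *m mpos B2)) + \tr (2%:R *: (V^T *m mneg B2))
  + \tr (V *m mpos A2 *m V^T) - \tr (V *m mneg A2 *m V^T)
  + \tr (lam2 *: (V^T *m degmx WP *m V)) - \tr (lam2 *: (V^T *m WP *m V))
  + \tr (lam2 *: (V^T *m degmx WQ *m V)) - \tr (lam2 *: (V^T *m WQ *m V)).

Definition numer n k (lam2 : R) (A1 A2 : 'M[R]_k) (B1 B2 : 'M[R]_(n, k))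
    (WP WQ : 'M[R]_n) (V : 'M[R]_(n, k)) : 'M[R]_(n, k) :=
  mpos B1 + mpos B2 + V *m (mneg A1 + mneg A2) + lam2 *: ((WP + WQ) *m V).

Definition denom n k (lam2 : R) (A1 A2 : 'M[R]_k) (B1 B2 : 'M[R]_(n, k))
    (WP WQ : 'M[R]_n) (V : 'M[R]_(n, k)) : 'M[R]_(n, k) :=
  mneg B1 + mneg B2 + V *m (mpos A1 + mpos A2)
  + lam2 *: ((degmx WP + degmx WQ) *m V).

Definition Tupd n k (lam2 : R) (A1 A2 : 'M[R]_k) (B1 B2 : 'M[R]_(n, k))
    (WP WQ : 'M[R]_n) (V : 'M[R]_(n, k)) : 'M[R]_(n, k) :=
  \matrix_(i, j) (V i j * Num.sqrt (numer lam2 A1 A2 B1 B2 WP WQ V i j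
                                    / denom lam2 A1 A2 B1 B2 WP WQ V i j)).

Definition kktgrad n k (lam2 : R) (A1 A2 : 'M[R]_k) (B1 B2 : 'M[R]_(n, k))
    (WP WQ : 'M[R]_n) (V : 'M[R]_(n, k)) : 'M[R]_(n, k) :=
  - 2%:R *: B1 - 2%:R *: B2 + 2%:R *: (V *m (A1 + A2))
  + (2%:R * lam2) *: ((laplacian WP + laplacian WQ) *m V).

End Defs.

From HB Require Import structures.
From mathcomp Require Import all_boot all_order all_algebra.
From mathcomp Require Import all_classical all_reals all_analysis.
From mathcomp Require Import ring lra.
Import Order.TTheory GRing.Theory Num.Theory.
Import numFieldNormedType.Exports.
Local Open Scope classical_set_scope.
Local Open Scope ring_scope.
Set Implicit Arguments. Unset Strict Implicit. Unset Printing Implicit Defensive.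

(* The objective splits as F = q_de - q_nu, where each part has the shape
   q(V) = 2<V, B> + <V, V A> + c <V, P V> with B, A, P entrywise nonnegative
   and A, P symmetric, and where the update's denominator and numerator are
   the half-gradients of q_de and q_nu.  For the update V' = V o X with
   X = sqrt(nu / de) we use the auxiliary-function argument of Lee-Seung type:
   - q(V o X) <= q(V) + wsum (grad q) V X (x^2 - 1)       (qform_major),
   - q(V) + wsum (grad q) V X (1 - x^-2) <= q(V o X)      (qform_minor),
   both reducing to elementary scalar inequalities (AM-GM and a reciprocal
   variant) summed with nonnegative weights; the quadratic parts use the
   symmetry of the weights.  For this particular X the two correction terms
   coincide (update_balance), so F(V') <= F(V) (update_descent).
   For the KKT part, the update gives V'_ij^2 de_ij = V_ij^2 nu_ij; passing to
   the limit yields (de_ij - nu_ij) v_ij = 0 at the limit point (limit_balance),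
   and the KKT gradient equals 2 (de - nu) (kktgrad_split). *)

Definition nonneg (R : realType) m p (M : 'M[R]_(m, p)) := forall i j, 0 <= M i j.

Section WeightedSums.
Variables (R : realType) (m p : nat).
Implicit Types (U X M N : 'M[R]_(m, p)) (f g : R -> R).

Definition hadamard U X : 'M[R]_(m, p) := \matrix_(i, j) (U i j * X i j).

Definition frob U M : R := \sum_i \sum_j U i j * M i j.

(* The sum of M_ij U_ij f(X_ij): it measures how a linear functional <., M>
   changes when U is rescaled entrywise by X, in terms of the profile f. *)
Definition wsum M U X f : R := \sum_i \sum_j M i j * U i j * f (X i j).

Lemma frob_trace U M : \tr (U^T *m M) = frob U M.
Proof.
rewrite /mxtrace /frob exchange_big /=; apply: eq_bigr => j _.
by rewrite mxE; apply: eq_bigr => i _; rewrite mxE.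
Qed.

Lemma frobD U M N : frob U (M + N) = frob U M + frob U N.
Proof.
rewrite /frob -big_split; apply: eq_bigr => i _.
by rewrite -big_split; apply: eq_bigr => j _; rewrite mxE mulrDr.
Qed.

Lemma frob_wsum1 U X M : frob U M = wsum M U X (fun=> 1).
Proof.
by apply: eq_bigr => i _; apply: eq_bigr => j _; rewrite mulr1 mulrC.
Qed.

Lemma frob_hadamard U X M : frob (hadamard U X) M = wsum M U X id.
Proof.
apply: eq_bigr => i _; apply: eq_bigr => j _; rewrite mxE /=; ring.
Qed.

Lemma wsumD M N U X f : wsum (M + N) U X f = wsum M U X f + wsum N U X f.
Proof.
rewrite /wsum -big_split; apply: eq_bigr => i _.
by rewrite -big_split; apply: eq_bigr => j _; rewrite mxE /=; ring.
Qed.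

Lemma wsumZ a M U X f : wsum (a *: M) U X f = a * wsum M U X f.
Proof.
rewrite /wsum mulr_sumr; apply: eq_bigr => i _.
by rewrite mulr_sumr; apply: eq_bigr => j _; rewrite mxE /=; ring.
Qed.

Lemma wsumDf M U X f g :
  wsum M U X f + wsum M U X g = wsum M U X (fun x => f x + g x).
Proof.
rewrite /wsum -big_split; apply: eq_bigr => i _.
by rewrite -big_split; apply: eq_bigr => j _; rewrite mulrDr.
Qed.

Lemma wsumZf a M U X f : a * wsum M U X f = wsum M U X (fun x => a * f x).
Proof.
rewrite /wsum mulr_sumr; apply: eq_bigr => i _.
by rewrite mulr_sumr; apply: eq_bigr => j _; rewrite mulrCA.
Qed.

Lemma wsum_le M U X f g : nonneg M -> nonneg U ->
  (forall i j, f (X i j) <= g (X i j)) -> wsum M U X f <= wsum M U X g.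
Proof.
move=> M0 U0 fg; apply: ler_sum => i _; apply: ler_sum => j _.
by apply: ler_wpM2l; [apply: mulr_ge0|].
Qed.

End WeightedSums.

Lemma hadamard_tr (R : realType) m p (U X : 'M[R]_(m, p)) :
  (hadamard U X)^T = hadamard U^T X^T.
Proof. by apply/matrixP => i j; rewrite !mxE. Qed.

Lemma frob_tr (R : realType) m p (U M : 'M[R]_(m, p)) : frob U^T M^T = frob U M.
Proof.
rewrite /frob exchange_big.
by apply: eq_bigr => i _; apply: eq_bigr => j _; rewrite !mxE.
Qed.

Lemma wsum_tr (R : realType) m p (M U X : 'M[R]_(m, p)) f :
  wsum M^T U^T X^T f = wsum M U X f.
Proof.
rewrite /wsum exchange_big.
by apply: eq_bigr => i _; apply: eq_bigr => j _; rewrite !mxE.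
Qed.

Lemma lin_major_scalar (R : realType) (x : R) : 2 * x <= 2 * 1 + (x ^+ 2 - 1).
Proof. by have := sqr_ge0 (x - 1); lra. Qed.

Lemma lin_minor_scalar (R : realType) (x : R) :
  0 < x -> 2 * 1 + (1 - (x ^+ 2)^-1) <= 2 * x.
Proof.
move=> x0; set a := x^-1.
have ax : a * x = 1 by rewrite mulVf // gt_eqF.
(* 2x - 3 + x^-2 = x^-2 (x - 1)^2 (2x + 1) >= 0 *)
have : 0 <= a ^+ 2 * (x - 1) ^+ 2 * (2 * x + 1).
  by apply: mulr_ge0; [apply: mulr_ge0; exact: sqr_ge0 | lra].
have -> : a ^+ 2 * (x - 1) ^+ 2 * (2 * x + 1) =
          2 * x * (a * x) ^+ 2 - 3 * (a * x) ^+ 2 + a ^+ 2 by ring.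
by rewrite ax -exprVn -/a; lra.
Qed.

Lemma quad_major_scalar (R : realType) (x y : R) :
  2 * (x * y) <= (1 + (x ^+ 2 - 1)) + (1 + (y ^+ 2 - 1)).
Proof. by have := sqr_ge0 (x - y); lra. Qed.

Lemma quad_minor_scalar (R : realType) (x y : R) : 0 < x -> 0 < y ->
  (1 + (1 - (x ^+ 2)^-1)) + (1 + (1 - (y ^+ 2)^-1)) <= 2 * (x * y).
Proof.
move=> x0 y0; set a := x^-1; set b := y^-1.
have ax : a * x = 1 by rewrite mulVf // gt_eqF.
have bx : b * y = 1 by rewrite mulVf // gt_eqF.
rewrite -!exprVn -/a -/b.
have ab_c : (a * b) * (x * y) = 1 by rewrite mulrACA ax bx mulr1.
have am_gm : 2 * (a * b) <= a ^+ 2 + b ^+ 2 by have := sqr_ge0 (a - b); lra.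
have inv_sum : 2 <= a * b + x * y.
  have : 0 <= (x * y) * (a * b - 1) ^+ 2.
    by apply: mulr_ge0; [apply: mulr_ge0; exact: ltW | exact: sqr_ge0].
  by nra.
lra.
Qed.

Section LinearBounds.
Variables (R : realType) (m p : nat) (M U X : 'M[R]_(m, p)).
Hypotheses (M0 : nonneg M) (U0 : nonneg U).

Lemma lin_major :
  2 * frob (hadamard U X) M <= 2 * frob U M + wsum M U X (fun x => x ^+ 2 - 1).
Proof.
rewrite frob_hadamard (frob_wsum1 U X) !wsumZf wsumDf.
by apply: wsum_le => // i j; exact: lin_major_scalar.
Qed.

Lemma lin_minor : (forall i j, 0 < X i j) ->
  2 * frob U M + wsum M U X (fun x => 1 - (x ^+ 2)^-1) <= 2 * frob (hadamard U X) M.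
Proof.
move=> X0; rewrite frob_hadamard (frob_wsum1 U X) !wsumZf wsumDf.
by apply: wsum_le => // i j; exact: lin_minor_scalar.
Qed.

End LinearBounds.

Section QuadraticBounds.
Variables (R : realType) (m p : nat) (U : 'M[R]_(m, p)) (A : 'M[R]_p).
Hypotheses (A_sym : A^T = A) (A0 : nonneg A) (U0 : nonneg U).

(* Both <U o X, (U o X) A> and wsum (U A) U X f expand into the triple sum
   sum_{i,j,l} U_il A_lj U_ij h(i,j,l), with nonnegative weights. *)
Definition qsum (h : 'I_m -> 'I_p -> 'I_p -> R) : R :=
  \sum_i \sum_j \sum_l U i l * A l j * U i j * h i j l.

Lemma qsumD h h' : qsum (fun i j l => h i j l + h' i j l) = qsum h + qsum h'.
Proof.
rewrite /qsum -big_split; apply: eq_bigr => i _; rewrite -big_split.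
by apply: eq_bigr => j _; rewrite -big_split; apply: eq_bigr => l _; rewrite mulrDr.
Qed.

Lemma qsumZ a h : qsum (fun i j l => a * h i j l) = a * qsum h.
Proof.
rewrite /qsum mulr_sumr; apply: eq_bigr => i _; rewrite mulr_sumr.
by apply: eq_bigr => j _; rewrite mulr_sumr; apply: eq_bigr => l _; rewrite mulrCA.
Qed.

Lemma qsum_le h h' : (forall i j l, h i j l <= h' i j l) -> qsum h <= qsum h'.
Proof.
move=> hh'; apply: ler_sum => i _; apply: ler_sum => j _; apply: ler_sum => l _.
apply: ler_wpM2l (hh' i j l).
by apply: mulr_ge0; [apply: mulr_ge0|]; rewrite ?U0 ?A0.
Qed.

(* The weights are symmetric in (j, l) because A is. *)
Lemma qsum_swap h : qsum (fun i j l => h i l j) = qsum h.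
Proof.
apply: eq_bigr => i _; rewrite exchange_big /=.
apply: eq_bigr => j _; apply: eq_bigr => l _.
by rewrite -{1}A_sym mxE; ring.
Qed.

Lemma frob_hadamard_qsum X :
  frob (hadamard U X) (hadamard U X *m A) = qsum (fun i j l => X i l * X i j).
Proof.
apply: eq_bigr => i _; apply: eq_bigr => j _.
by rewrite !mxE mulr_sumr; apply: eq_bigr => l _; rewrite !mxE; ring.
Qed.

Lemma wsum_qsum X f : wsum (U *m A) U X f = qsum (fun i j l => f (X i j)).
Proof.
apply: eq_bigr => i _; apply: eq_bigr => j _.
by rewrite mxE !mulr_suml; apply: eq_bigr => l _; ring.
Qed.

Lemma quad_major X :
  frob (hadamard U X) (hadamard U X *m A)
  <= frob U (U *m A) + wsum (U *m A) U X (fun x => x ^+ 2 - 1).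
Proof.
rewrite (frob_wsum1 U X) wsumDf frob_hadamard_qsum wsum_qsum.
have H : qsum (fun i j l => 2 * (X i l * X i j))
         <= qsum (fun i j l => (1 + (X i l ^+ 2 - 1)) + (1 + (X i j ^+ 2 - 1))).
  by apply: qsum_le => i j l; exact: quad_major_scalar.
rewrite qsumZ qsumD in H.
by rewrite (qsum_swap (fun i j l => 1 + (X i j ^+ 2 - 1))) in H; lra.
Qed.

Lemma quad_minor (X : 'M[R]_(m, p)) : (forall i j, 0 < X i j) ->
  frob U (U *m A) + wsum (U *m A) U X (fun x => 1 - (x ^+ 2)^-1)
  <= frob (hadamard U X) (hadamard U X *m A).
Proof.
move=> X0; rewrite (frob_wsum1 U X) wsumDf frob_hadamard_qsum wsum_qsum.
have H : qsum (fun i j l => (1 + (1 - (X i l ^+ 2)^-1)) + (1 + (1 - (X i j ^+ 2)^-1)))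
         <= qsum (fun i j l => 2 * (X i l * X i j)).
  by apply: qsum_le => i j l; exact: quad_minor_scalar.
rewrite qsumZ qsumD in H.
by rewrite (qsum_swap (fun i j l => 1 + (1 - (X i j ^+ 2)^-1))) in H; lra.
Qed.

End QuadraticBounds.

(* Left-multiplied quadratic forms <V, P V> reduce to the previous case by
   transposition. *)
Lemma trmx_mul_symr (R : realType) m p (P : 'M[R]_m) (V : 'M[R]_(m, p)) :
  P^T = P -> (P *m V)^T = V^T *m P.
Proof. by move=> P_sym; rewrite trmx_mul P_sym. Qed.

Lemma nonneg_tr (R : realType) m p (U : 'M[R]_(m, p)) : nonneg U -> nonneg U^T.
Proof. by move=> U0 i j; rewrite mxE. Qed.

Lemma quadl_major (R : realType) m p (U X : 'M[R]_(m, p)) (P : 'M[R]_m) :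
  P^T = P -> nonneg P -> nonneg U ->
  frob (hadamard U X) (P *m hadamard U X)
  <= frob U (P *m U) + wsum (P *m U) U X (fun x => x ^+ 2 - 1).
Proof.
move=> P_sym P0 U0; have := quad_major P_sym P0 (nonneg_tr U0) X^T.
by rewrite -hadamard_tr -!(trmx_mul_symr _ P_sym) !frob_tr wsum_tr.
Qed.

Lemma quadl_minor (R : realType) m p (U X : 'M[R]_(m, p)) (P : 'M[R]_m) :
  P^T = P -> nonneg P -> nonneg U -> (forall i j, 0 < X i j) ->
  frob U (P *m U) + wsum (P *m U) U X (fun x => 1 - (x ^+ 2)^-1)
  <= frob (hadamard U X) (P *m hadamard U X).
Proof.
move=> P_sym P0 U0 X0.
have XT0 : forall i j, 0 < X^T i j by move=> i j; rewrite mxE.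
have := quad_minor P_sym P0 (nonneg_tr U0) XT0.
by rewrite -hadamard_tr -!(trmx_mul_symr _ P_sym) !frob_tr wsum_tr.
Qed.

Section QuadraticObjective.
Variables (R : realType) (n k : nat).
Variables (B : 'M[R]_(n, k)) (A : 'M[R]_k) (P : 'M[R]_n) (c : R).
Implicit Types V X : 'M[R]_(n, k).

Definition qform (V : 'M[R]_(n, k)) : R :=
  2 * frob V B + frob V (V *m A) + c * frob V (P *m V).

(* Half of the gradient of q at V. *)
Definition qgrad (V : 'M[R]_(n, k)) : 'M[R]_(n, k) := B + V *m A + c *: (P *m V).

Hypotheses (B0 : nonneg B) (A_sym : A^T = A) (A0 : nonneg A).
Hypotheses (P_sym : P^T = P) (P0 : nonneg P) (c0 : 0 <= c).

Lemma wsum_qgrad V X f : wsum (qgrad V) V X f =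
  wsum B V X f + wsum (V *m A) V X f + c * wsum (P *m V) V X f.
Proof. by rewrite /qgrad !wsumD wsumZ. Qed.

Lemma qform_major V X : nonneg V ->
  qform (hadamard V X) <= qform V + wsum (qgrad V) V X (fun x => x ^+ 2 - 1).
Proof.
move=> V0; rewrite wsum_qgrad /qform.
have lin := lin_major X B0 V0.
have quad := quad_major A_sym A0 V0 X.
have quadl := ler_wpM2l c0 (quadl_major X P_sym P0 V0).
by rewrite mulrDr in quadl; lra.
Qed.

Lemma qform_minor V X : nonneg V -> (forall i j, 0 < X i j) ->
  qform V + wsum (qgrad V) V X (fun x => 1 - (x ^+ 2)^-1) <= qform (hadamard V X).
Proof.
move=> V0 X0; rewrite wsum_qgrad /qform.
have lin := lin_minor B0 V0 X0.
have quad := quad_minor A_sym A0 V0 X0.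
have quadl := ler_wpM2l c0 (quadl_minor P_sym P0 V0 X0).
by rewrite mulrDr in quadl; lra.
Qed.

End QuadraticObjective.

Definition update_factor (R : realType) m p (nu de : 'M[R]_(m, p)) : 'M[R]_(m, p) :=
  \matrix_(i, j) Num.sqrt (nu i j / de i j).

Section MultiplicativeUpdate.
Variables (R : realType) (m p : nat) (nu de : 'M[R]_(m, p)).
Hypotheses (nu0 : forall i j, 0 < nu i j) (de0 : forall i j, 0 < de i j).

Lemma update_factor_gt0 i j : 0 < update_factor nu de i j.
Proof. by rewrite mxE sqrtr_gt0 divr_gt0. Qed.

(* With X = sqrt(nu/de), the increase allowed by the majorization of the
   de-part equals the decrease forced by the minorization of the nu-part:
   both sides are sum_ij U_ij (nu_ij - de_ij). *)
Lemma update_balance U :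
  wsum de U (update_factor nu de) (fun x => x ^+ 2 - 1)
  = wsum nu U (update_factor nu de) (fun x => 1 - (x ^+ 2)^-1).
Proof.
apply: eq_bigr => i _; apply: eq_bigr => j _.
rewrite mxE sqr_sqrtr; last by rewrite ltW // divr_gt0.
have := nu0 i j; have := de0 i j; move: (nu i j) (de i j) => a b b0 a0.
by field; rewrite !gt_eqF.
Qed.

(* The update equation in squared form, V'_ij^2 de_ij = V_ij^2 nu_ij: this
   is the relation that survives passing to the limit. *)
Lemma update_sqr U i j :
  (hadamard U (update_factor nu de)) i j ^+ 2 * de i j = U i j ^+ 2 * nu i j.
Proof.
rewrite !mxE exprMn sqr_sqrtr; last by rewrite ltW // divr_gt0.
have := de0 i j; move: (de i j) => b b0.
by field; rewrite gt_eqF.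
Qed.

End MultiplicativeUpdate.

Lemma update_descent (R : realType) n k (c : R)
    (Bd Bn : 'M[R]_(n, k)) (Ad An : 'M[R]_k) (Pd Pn : 'M[R]_n) (V nu de : 'M[R]_(n, k)) :
  0 <= c -> nonneg Bd -> nonneg Bn -> Ad^T = Ad -> An^T = An ->
  nonneg Ad -> nonneg An -> Pd^T = Pd -> Pn^T = Pn -> nonneg Pd -> nonneg Pn ->
  nonneg V -> nu = qgrad Bn An Pn c V -> de = qgrad Bd Ad Pd c V ->
  (forall i j, 0 < nu i j) -> (forall i j, 0 < de i j) ->
  qform Bd Ad Pd c (hadamard V (update_factor nu de))
    - qform Bn An Pn c (hadamard V (update_factor nu de))
  <= qform Bd Ad Pd c V - qform Bn An Pn c V.
Proof.
move=> c0 Bd0 Bn0 Ad_sym An_sym Ad0 An0 Pd_sym Pn_sym Pd0 Pn0 V0 nuE deE nu0 de0.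
have X0 := update_factor_gt0 nu0 de0.
have up := qform_major Bd0 Ad_sym Ad0 Pd_sym Pd0 c0 (update_factor nu de) V0.
have down := qform_minor Bn0 An_sym An0 Pn_sym Pn0 c0 V0 X0.
have bal := update_balance nu0 de0 V.
rewrite -nuE -deE in up down; lra.
Qed.

Lemma nonnegD (R : realType) m p (M N : 'M[R]_(m, p)) :
  nonneg M -> nonneg N -> nonneg (M + N).
Proof. by move=> M0 N0 i j; rewrite mxE addr_ge0. Qed.

Lemma symD (R : realType) p (M N : 'M[R]_p) : M^T = M -> N^T = N -> (M + N)^T = M + N.
Proof. by move=> hM hN; rewrite linearD /= hM hN. Qed.

Lemma mpos_nonneg (R : realType) m p (M : 'M[R]_(m, p)) : nonneg (mpos M).
Proof. by move=> i j; rewrite mxE divr_ge0 // -lerBlDr sub0r ler_normr lexx orbT. Qed.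

Lemma mneg_nonneg (R : realType) m p (M : 'M[R]_(m, p)) : nonneg (mneg M).
Proof. by move=> i j; rewrite mxE divr_ge0 // subr_ge0 ler_norm. Qed.

Lemma mpos_sym (R : realType) p (M : 'M[R]_p) : M^T = M -> (mpos M)^T = mpos M.
Proof. by move=> hM; rewrite /mpos map_trmx hM. Qed.

Lemma mneg_sym (R : realType) p (M : 'M[R]_p) : M^T = M -> (mneg M)^T = mneg M.
Proof. by move=> hM; rewrite /mneg map_trmx hM. Qed.

Lemma mpos_sub_mneg (R : realType) m p (M : 'M[R]_(m, p)) : mpos M - mneg M = M.
Proof. by apply/matrixP => i j; rewrite !mxE; field. Qed.

Lemma degmx_sym (R : realType) p (W : 'M[R]_p) : (degmx W)^T = degmx W.
Proof. exact: tr_diag_mx. Qed.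

Lemma degmx_nonneg (R : realType) p (W : 'M[R]_p) : nonneg W -> nonneg (degmx W).
Proof. by move=> W0 i j; rewrite !mxE mulrn_wge0 // sumr_ge0. Qed.

Section Objective.
Variables (R : realType) (n k : nat) (lam2 : R).
Variables (A1 A2 : 'M[R]_k) (B1 B2 : 'M[R]_(n, k)) (WP WQ : 'M[R]_n).

Definition Bde := mneg B1 + mneg B2.
Definition Ade := mpos A1 + mpos A2.
Definition Pde := degmx WP + degmx WQ.
Definition Bnu := mpos B1 + mpos B2.
Definition Anu := mneg A1 + mneg A2.
Definition Pnu := WP + WQ.

Lemma denom_qgrad V : denom lam2 A1 A2 B1 B2 WP WQ V = qgrad Bde Ade Pde lam2 V.
Proof. by []. Qed.

Lemma numer_qgrad V : numer lam2 A1 A2 B1 B2 WP WQ V = qgrad Bnu Anu Pnu lam2 V.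
Proof. by []. Qed.

Lemma Fobj_split V : Fobj lam2 A1 A2 B1 B2 WP WQ V =
  qform Bde Ade Pde lam2 V - qform Bnu Anu Pnu lam2 V.
Proof.
have tr_right (A : 'M[R]_k) : \tr (V *m A *m V^T) = frob V (V *m A).
  by rewrite mxtrace_mulC frob_trace.
have tr_left (P : 'M[R]_n) : \tr (V^T *m P *m V) = frob V (P *m V).
  by rewrite -mulmxA frob_trace.
rewrite /Fobj /qform !mxtraceZ !frob_trace !tr_right !tr_left.
rewrite /Bde /Ade /Pde /Bnu /Anu /Pnu !mulmxDr !mulmxDl !frobD; ring.
Qed.

Lemma Tupd_hadamard V : Tupd lam2 A1 A2 B1 B2 WP WQ V =
  hadamard V (update_factor (numer lam2 A1 A2 B1 B2 WP WQ V)
                            (denom lam2 A1 A2 B1 B2 WP WQ V)).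
Proof. by apply/matrixP => i j; rewrite !mxE. Qed.

(* The KKT gradient is twice the difference of the update's denominator and
   numerator, since M = M^+ - M^- and L = D - W. *)
Lemma kktgrad_split V : kktgrad lam2 A1 A2 B1 B2 WP WQ V =
  2 *: (denom lam2 A1 A2 B1 B2 WP WQ V - numer lam2 A1 A2 B1 B2 WP WQ V).
Proof.
rewrite /kktgrad /denom /numer /laplacian.
rewrite -{1}(mpos_sub_mneg B1) -{1}(mpos_sub_mneg B2).
rewrite -{1}(mpos_sub_mneg A1) -{1}(mpos_sub_mneg A2).
rewrite !mulmxDr !mulmxN !mulmxDl !mulNmx.
move: (V *m mpos A1) (V *m mneg A1) (V *m mpos A2) (V *m mneg A2).
move: (degmx WP *m V) (WP *m V) (degmx WQ *m V) (WQ *m V).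
move: (mpos B1) (mneg B1) (mpos B2) (mneg B2) => a b c d e f g h p q r s.
by apply/matrixP => i j; rewrite !mxE; ring.
Qed.

Lemma kktgrad_entry V i j : kktgrad lam2 A1 A2 B1 B2 WP WQ V i j =
  2 * (denom lam2 A1 A2 B1 B2 WP WQ V i j - numer lam2 A1 A2 B1 B2 WP WQ V i j).
Proof.
rewrite kktgrad_split.
by move: (denom _ _ _ _ _ _ _ _) (numer _ _ _ _ _ _ _ _) => D N; rewrite !mxE.
Qed.

Lemma Fobj_Tupd_le V : 0 <= lam2 ->
  A1^T = A1 -> A2^T = A2 -> WP^T = WP -> WQ^T = WQ -> nonneg WP -> nonneg WQ ->
  nonneg V -> (forall i j, 0 < numer lam2 A1 A2 B1 B2 WP WQ V i j) ->
  (forall i j, 0 < denom lam2 A1 A2 B1 B2 WP WQ V i j) ->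
  Fobj lam2 A1 A2 B1 B2 WP WQ (Tupd lam2 A1 A2 B1 B2 WP WQ V)
  <= Fobj lam2 A1 A2 B1 B2 WP WQ V.
Proof.
move=> lam0 A1_sym A2_sym WP_sym WQ_sym WP0 WQ0 V0 nu0 de0.
have nuE := numer_qgrad V; have deE := denom_qgrad V.
rewrite Tupd_hadamard !Fobj_split; apply: update_descent nuE deE nu0 de0 => //.
- exact: nonnegD (mneg_nonneg B1) (mneg_nonneg B2).
- exact: nonnegD (mpos_nonneg B1) (mpos_nonneg B2).
- exact: symD (mpos_sym A1_sym) (mpos_sym A2_sym).
- exact: symD (mneg_sym A1_sym) (mneg_sym A2_sym).
- exact: nonnegD (mpos_nonneg A1) (mpos_nonneg A2).
- exact: nonnegD (mneg_nonneg A1) (mneg_nonneg A2).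
- exact: symD (degmx_sym WP) (degmx_sym WQ).
- exact: symD WP_sym WQ_sym.
- exact: nonnegD (degmx_nonneg WP0) (degmx_nonneg WQ0).
- exact: nonnegD WP0 WQ0.
Qed.

End Objective.

Lemma cvg_sum (R : realType) p (F : 'I_p -> nat -> R) (a : 'I_p -> R) :
  (forall l, F l t @[t --> \oo] --> a l) ->
  \sum_l F l t @[t --> \oo] --> \sum_l a l.
Proof. by move=> Fa; apply: cvg_big => //; exact: add_continuous. Qed.

Lemma cvg_qgrad (R : realType) n k (B : 'M[R]_(n, k)) (A : 'M[R]_k) (P : 'M[R]_n) c
    (Vt : nat -> 'M[R]_(n, k)) (V : 'M[R]_(n, k)) :
  (forall i j, Vt t i j @[t --> \oo] --> V i j) ->
  forall i j, qgrad B A P c (Vt t) i j @[t --> \oo] --> qgrad B A P c V i j.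
Proof.
move=> VtV i j; rewrite !mxE; under eq_cvg do rewrite !mxE.
apply: cvgD; [apply: cvgD; [exact: cvg_cst|] | apply: cvgMl_tmp].
  by apply: cvg_sum => l; apply: cvgMr_tmp.
by apply: cvg_sum => l; apply: cvgMl_tmp.
Qed.

Lemma limit_balance (R : realType) (v d u : nat -> R) (a b e : R) :
  (forall t, v t.+1 ^+ 2 * d t = v t ^+ 2 * u t) ->
  v t @[t --> \oo] --> a -> d t @[t --> \oo] --> b -> u t @[t --> \oo] --> e ->
  (b - e) * a = 0.
Proof.
move=> vdu va db ue.
have vSa : v t.+1 @[t --> \oo] --> a by rewrite (cvg_shiftS v).
have lim_b : v t ^+ 2 * u t @[t --> \oo] --> a ^+ 2 * b.
  under eq_cvg do rewrite -vdu.
  by apply: cvgM => //; rewrite expr2; apply: cvgM.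
have lim_e : v t ^+ 2 * u t @[t --> \oo] --> a ^+ 2 * e.
  by apply: cvgM => //; rewrite expr2; apply: cvgM.
have : a ^+ 2 * (b - e) = 0.
  by rewrite mulrBr (cvg_unique (@Rhausdorff R) lim_b lim_e) subrr.
by move/eqP; rewrite mulf_eq0 sqrf_eq0 => /orP [/eqP -> | /eqP ->]; rewrite ?mulr0 ?mul0r.
Qed.

Theorem theorem1 (R : realType) (n k : nat) (lam2 : R)
    (A1 A2 : 'M[R]_k) (B1 B2 : 'M[R]_(n, k)) (WP WQ : 'M[R]_n)
    (Vt : nat -> 'M[R]_(n, k)) :
  (0 < n)%N -> (0 < k)%N -> 0 <= lam2 ->
  A1^T = A1 -> A2^T = A2 -> WP^T = WP -> WQ^T = WQ ->
  (forall i j, 0 <= WP i j) -> (forall i j, 0 <= WQ i j) ->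
  (forall i j, 0 < Vt 0%N i j) ->
  (forall t, Vt t.+1 = Tupd lam2 A1 A2 B1 B2 WP WQ (Vt t)) ->
  (forall t i j, 0 < numer lam2 A1 A2 B1 B2 WP WQ (Vt t) i j) ->
  (forall t i j, 0 < denom lam2 A1 A2 B1 B2 WP WQ (Vt t) i j) ->
  (forall t, Fobj lam2 A1 A2 B1 B2 WP WQ (Vt t.+1)
             <= Fobj lam2 A1 A2 B1 B2 WP WQ (Vt t))
  /\
  (forall Vstar : 'M[R]_(n, k),
     (forall i j, (fun t => Vt t i j) @ \oo --> Vstar i j) ->
     (forall i j, 0 < denom lam2 A1 A2 B1 B2 WP WQ Vstar i j) ->
     forall i j, kktgrad lam2 A1 A2 B1 B2 WP WQ Vstar i j * Vstar i j = 0).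
Proof.
move=> _ _ lam0 A1_sym A2_sym WP_sym WQ_sym WP0 WQ0 V0_pos Vt_step nu0 de0.
have Vt0 t : nonneg (Vt t).
  elim: t => [|t IH] i j; first exact: ltW.
  by rewrite Vt_step Tupd_hadamard !mxE mulr_ge0 ?IH ?sqrtr_ge0.
split=> [t | Vs Vt_cvg _ i j].
  by rewrite Vt_step; apply: Fobj_Tupd_le.
set de := denom lam2 A1 A2 B1 B2 WP WQ.
set nu := numer lam2 A1 A2 B1 B2 WP WQ.
have balance : (de Vs i j - nu Vs i j) * Vs i j = 0.
  apply: (limit_balance (v := fun t => Vt t i j) (d := fun t => de (Vt t) i j)
                        (u := fun t => nu (Vt t) i j)) (Vt_cvg i j) _ _.
  - by move=> t; rewrite Vt_step Tupd_hadamard update_sqr.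
  - exact: cvg_qgrad.
  - exact: cvg_qgrad.
by rewrite kktgrad_entry -/de -/nu -mulrA balance mulr0.
Qed.
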